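(* Let $S$ be a $0$-left cancellative semigroup equipped with a homogeneous $N$-valued length function $\ell$. Let $r\in S$ and let $\sigma$ be an unbounded string with $\sigma\cap rS\neq\emptyset$. Then: (i) $r^{-1}*\sigma=\{t\in S: rt\in\sigma\}$ is unbounded; (ii) if $\mu$ is a string with $r^{-1}*\sigma\subseteq\mu$, then $rx\neq0$ for every $x\in\mu$; (iii) if $\sigma$ is a maximal string, then $r^{-1}*\sigma$ is also a maximal string.
   Context: $S$ has zero $0$, $S'=S\setminus\{0\}$; $0$-left cancellative: $st=sr\neq0\Rightarrow t=r$. $\tilde S=S\cup\{1\}$ ($1$ an adjoined identity); $s\mid t$ means $t\in s\tilde S$. A string is a nonempty $\sigma\subseteq S$ with $0\notin\sigma$, closed under divisors, and in which any two elements have a common multiple in $\sigma$; maximal means not properly contained in another string. Let $N$ be a totally ordered set. An $N$-valued length function is $\ell:S'\to N$ such that for $r,s,t\in S'$: (a) $s\mid t\Rightarrow\ell(s)\le\ell(t)$; (b) if $r\mid st\neq0$ and $\ell(r)\le\ell(s)$ then $r\mid s$. A set $X\subseteq S'$ is bounded if $\ell(s)\le n_0$ for all $s\in X$, for some $n_0\in N$. $\ell$ is homogeneous if for every $r\in S$ and every bounded $X\subseteq\{x\in S':rx\neq0\}$, the set $rX$ is bounded. *)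

From mathcomp Require Import all_boot all_order.
Set Implicit Arguments. Unset Strict Implicit. Unset Printing Implicit Defensive.
Import Order.TTheory.
Local Open Scope order_scope.

Definition semigroup_with_zero (S : Type) (mul : S -> S -> S) (z : S) : Prop :=
  (forall a b c, mul a (mul b c) = mul (mul a b) c) /\
  (forall a, mul z a = z) /\ (forall a, mul a z = z).

Definition zero_left_cancellative (S : Type) (mul : S -> S -> S) (z : S) : Prop :=
  forall s t r, mul s t = mul s r -> mul s t <> z -> t = r.

Definition sdvd (S : Type) (mul : S -> S -> S) (s t : S) : Prop :=
  t = s \/ exists u, t = mul s u.

Definition is_string (S : Type) (mul : S -> S -> S) (z : S) (sigma : S -> Prop) : Prop :=
  (exists x, sigma x) /\
  ~ sigma z /\
  (forall s t, sigma t -> sdvd mul s t -> sigma s) /\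
  (forall s t, sigma s -> sigma t ->
     exists u, sigma u /\ sdvd mul s u /\ sdvd mul t u).

Definition is_maximal_string (S : Type) (mul : S -> S -> S) (z : S) (sigma : S -> Prop) : Prop :=
  is_string mul z sigma /\
  forall tau, is_string mul z tau -> (forall x, sigma x -> tau x) ->
    forall x, tau x -> sigma x.

(* N-valued length function ell : S' -> N (given as a total function on S,
   only its values on S' = S \ {0} matter). *)
Definition is_length_function (S : Type) (mul : S -> S -> S) (z : S)
    (d : Order.disp_t) (N : orderType d) (ell : S -> N) : Prop :=
  (forall s t, s <> z -> t <> z -> sdvd mul s t -> ell s <= ell t) /\
  (forall r s t, r <> z -> s <> z -> t <> z -> mul s t <> z ->
     sdvd mul r (mul s t) -> ell r <= ell s -> sdvd mul r s).

Definition bounded (S : Type) (d : Order.disp_t) (N : orderType d) (ell : S -> N)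
    (X : S -> Prop) : Prop :=
  exists n0 : N, forall s, X s -> ell s <= n0.

Definition homogeneous (S : Type) (mul : S -> S -> S) (z : S)
    (d : Order.disp_t) (N : orderType d) (ell : S -> N) : Prop :=
  forall (r : S) (X : S -> Prop),
    (forall x, X x -> x <> z /\ mul r x <> z) ->
    bounded ell X ->
    bounded ell (fun y => exists x, X x /\ y = mul r x).

Definition rinv_star (S : Type) (mul : S -> S -> S) (r : S) (sigma : S -> Prop) : S -> Prop :=
  fun t => sigma (mul r t).

From Pilot Require Import Defs.
From mathcomp Require Import all_boot all_order.
Import Order.TTheory.
Set Implicit Arguments.
Local Open Scope order_scope.
(* [all_order] exports an unrelated [sdvd]. *)
Local Notation sdvd := Defs.sdvd.

(* Since [sigma] is directed and meets [r S], every element of [sigma] divides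
   some [r t] in [sigma]; homogeneity then transports a bound on
   [r^{-1} * sigma] to a bound on [sigma], which gives (i).  For (ii), if
   [r x = 0] with [x] in a string [mu], axiom (b) of length functions forces
   every element of [mu] of length at least [ell x] to be a multiple of [x],
   hence killed by [r]; so [r^{-1} * sigma] would be bounded by [ell x].
   For (iii), by (ii) any string [tau] above [r^{-1} * sigma] generates the
   string of divisors of [r tau], which contains [sigma]; maximality of
   [sigma] then pulls [tau] back into [r^{-1} * sigma]. *)

Section Divisibility.
Variables (S : Type) (mul : S -> S -> S) (z : S).
Hypothesis HS : semigroup_with_zero mul z.

Lemma sdvd_trans (a b c : S) : sdvd mul a b -> sdvd mul b c -> sdvd mul a c.
Proof.
case: HS => mulA _.
move=> [->|[u ->]] [->|[v ->]]; first by left.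
- by right; exists v.
- by right; exists u.
- by right; exists (mul u v); rewrite mulA.
Qed.

Lemma sdvd_mul2l (r a b : S) : sdvd mul a b -> sdvd mul (mul r a) (mul r b).
Proof.
case: HS => mulA _.
by move=> [->|[u ->]]; [left | right; exists u; rewrite mulA].
Qed.

Lemma sdvd0 (a : S) : sdvd mul z a -> a = z.
Proof. by case: HS => _ [mul0a _] [->|[u ->]]. Qed.

Lemma sdvd_mul0 (r a b : S) : sdvd mul a b -> mul r a = z -> mul r b = z.
Proof.
case: HS => mulA [mul0a _].
by move=> [->|[u ->]] // rab0; rewrite mulA rab0 mul0a.
Qed.

Lemma string_neq0 {sigma : S -> Prop} {x : S} :
  is_string mul z sigma -> sigma x -> x <> z.
Proof. by move=> [_ [sigma0 _]] sx x0; apply: sigma0; rewrite -x0. Qed.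

Lemma string_sdvd_lmul {sigma : S -> Prop} {r m y : S} :
  is_string mul z sigma -> sigma (mul r m) ->
  sigma y -> exists t, sigma (mul r t) /\ sdvd mul y (mul r t).
Proof.
case: HS => mulA _ [_ [_ [_ sigma_cm]]] srm sy.
have [u [su [yu [ur|[v ur]]]]] := sigma_cm _ _ sy srm; subst u; first by exists m.
by exists (mul m v); rewrite mulA.
Qed.

Lemma rinv_star_string {sigma : S -> Prop} {r m : S} :
  zero_left_cancellative mul z ->
  is_string mul z sigma -> sigma (mul r m) ->
  is_string mul z (rinv_star mul r sigma).
Proof.
case: HS => mulA [_ mula0] canc sigmaS srm.
have [_ [sigma0 [sigma_dvd sigma_cm]]] := sigmaS.
split; first by exists m.
split; first by rewrite /rinv_star mula0.
split; first by move=> s t st dst; apply: sigma_dvd st (sdvd_mul2l r dst).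
move=> s t ss st.
have [u [su [su_dvd tu_dvd]]] := sigma_cm _ _ ss st.
have [u' [ur su']] : exists u', u = mul r u' /\ sdvd mul s u'.
  case: su_dvd => [->|[v ->]]; first by exists s; split; last left.
  by exists (mul s v); split; [rewrite mulA | right; exists v].
subst u.
have ru'0 : mul r u' <> z by apply: string_neq0 sigmaS su.
exists u'; do 2!split=> //.
case: tu_dvd => [tu|[v tu]]; first by left; apply: canc ru'0; rewrite tu.
by right; exists v; apply: canc ru'0; rewrite tu mulA.
Qed.

Definition lmul_divisors (r : S) (tau : S -> Prop) : S -> Prop :=
  fun y => exists x, tau x /\ sdvd mul y (mul r x).

Lemma lmul_divisors_string {r : S} {tau : S -> Prop} :
  is_string mul z tau -> (forall x, tau x -> mul r x <> z) ->
  is_string mul z (lmul_divisors r tau).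
Proof.
move=> [[x0 tx0] [_ [_ tau_cm]]] rtau0.
split; first by exists (mul r x0), x0; split; last left.
split; first by move=> [x [tx /sdvd0 rx0]]; exact: rtau0 tx rx0.
split.
  move=> s t [x [tx tx_dvd]] st; exists x; split=> //.
  exact: sdvd_trans st tx_dvd.
move=> s t [x1 [tx1 dx1]] [x2 [tx2 dx2]].
have [x3 [tx3 [d13 d23]]] := tau_cm _ _ tx1 tx2.
exists (mul r x3); split; first by exists x3; split; last left.
by split; [apply: sdvd_trans dx1 _ | apply: sdvd_trans dx2 _];
  apply: sdvd_mul2l.
Qed.

Lemma rinv_star_maximal {sigma : S -> Prop} {r m : S} :
  zero_left_cancellative mul z ->
  is_maximal_string mul z sigma -> sigma (mul r m) ->
  (forall tau, is_string mul z tau ->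
     (forall x, rinv_star mul r sigma x -> tau x) ->
     forall x, tau x -> mul r x <> z) ->
  is_maximal_string mul z (rinv_star mul r sigma).
Proof.
move=> canc [sigmaS sigma_max] srm rtau0.
split; first exact: rinv_star_string canc sigmaS srm.
move=> tau tauS sub_tau x tx.
have sigma_sub : forall y, sigma y -> lmul_divisors r tau y.
  move=> y sy; have [t [srt dyt]] := string_sdvd_lmul sigmaS srm sy.
  by exists t; split=> //; apply: sub_tau.
have divS := lmul_divisors_string tauS (rtau0 _ tauS sub_tau).
by apply: sigma_max divS sigma_sub _ _; exists x; split; last left.
Qed.

End Divisibility.

Section LengthFunction.
Variables (S : Type) (mul : S -> S -> S) (z : S).
Variables (d : Order.disp_t) (N : orderType d) (ell : S -> N).
Hypothesis HS : semigroup_with_zero mul z.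
Hypothesis Hell : is_length_function mul z ell.

Lemma string_sdvd_of_ell_le {mu : S -> Prop} {x t : S} :
  is_string mul z mu -> mu x -> mu t -> ell x <= ell t -> sdvd mul x t.
Proof.
case: HS => _ [_ mula0] muS mx mt le_xt.
have [_ [_ [_ mu_cm]]] := muS.
have [w [mw [xw [tw|[v tw]]]]] := mu_cm _ _ mx mt; subst w => //.
have tv0 : mul t v <> z by apply: string_neq0 muS mw.
apply: (Hell.2 x t v) => //; try exact: string_neq0 muS _.
by move=> v0; apply: tv0; rewrite v0 mula0.
Qed.

Lemma rinv_star_unbounded {sigma : S -> Prop} {r m : S} :
  homogeneous mul z ell ->
  is_string mul z sigma -> ~ bounded ell sigma -> sigma (mul r m) ->
  ~ bounded ell (rinv_star mul r sigma).
Proof.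
case: HS => _ [_ mula0] hom sigmaS sigma_unb srm [n0 le_n0].
pose X t := rinv_star mul r sigma t /\ t <> z.
have X_lmul0 x : X x -> x <> z /\ mul r x <> z.
  by move=> [srx x0]; split=> //; apply: string_neq0 sigmaS srx.
have X_bounded : bounded ell X by exists n0 => s [/le_n0].
have [n1 le_n1] := hom r X X_lmul0 X_bounded.
apply: sigma_unb; exists n1 => y sy.
have [t [srt dyt]] := string_sdvd_lmul HS sigmaS srm sy.
have t0 : t <> z.
  by move=> t0; apply: (string_neq0 sigmaS srt); rewrite t0 mula0.
apply: le_trans (le_n1 (mul r t) _); last by exists t.
apply: Hell.1 dyt; first exact: string_neq0 sigmaS sy.
exact: string_neq0 sigmaS srt.
Qed.

Lemma string_lmul_neq0 {sigma mu : S -> Prop} {r : S} :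
  is_string mul z sigma -> ~ bounded ell (rinv_star mul r sigma) ->
  is_string mul z mu -> (forall x, rinv_star mul r sigma x -> mu x) ->
  forall x, mu x -> mul r x <> z.
Proof.
move=> sigmaS rinv_unb muS sub_mu x mx rx0.
apply: rinv_unb; exists (ell x) => t srt.
case/orP: (le_total (ell t) (ell x)) => // le_xt.
have dxt := string_sdvd_of_ell_le muS mx (sub_mu _ srt) le_xt.
by case: (string_neq0 sigmaS (srt : sigma (mul r t))); exact: (sdvd_mul0 HS r dxt rx0).
Qed.

End LengthFunction.

Theorem lemma13p3 (S : Type) (mul : S -> S -> S) (z : S)
  (d : Order.disp_t) (N : orderType d) (ell : S -> N)
  (HS : semigroup_with_zero mul z)
  (Hcanc : zero_left_cancellative mul z)
  (Hell : is_length_function mul z ell)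
  (Hhom : homogeneous mul z ell)
  (r : S) (sigma : S -> Prop)
  (Hsigma : is_string mul z sigma)
  (Hunb : ~ bounded ell sigma)
  (Hmeet : exists s, sigma (mul r s)) :
  ~ bounded ell (rinv_star mul r sigma) /\
  (forall mu, is_string mul z mu ->
     (forall x, rinv_star mul r sigma x -> mu x) ->
     forall x, mu x -> mul r x <> z) /\
  (is_maximal_string mul z sigma -> is_maximal_string mul z (rinv_star mul r sigma)).
Proof.
have [m srm] := Hmeet.
have rinv_unb := rinv_star_unbounded HS Hell Hhom Hsigma Hunb srm.
have rmu0 := string_lmul_neq0 HS Hell Hsigma rinv_unb.
split=> //; split=> // sigma_max.
exact: rinv_star_maximal Hcanc sigma_max srm rmu0.
Qed.
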